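(* Let $\mathcal{C}_1$ and $\mathcal{C}_2$ be nice GFG-tNCWs with $L(\mathcal{C}_1)=L(\mathcal{C}_2)$, each minimal (no GFG-tNCW for the same language has fewer states) and each $\alpha$-maximal. Then $\mathcal{C}_1$ and $\mathcal{C}_2$ are isomorphic.
   Context: A tNCW is $\mathcal{A}=\langle\Sigma,Q,q_0,\delta,\alpha\rangle$: finite alphabet $\Sigma$, finite state set $Q$, initial state $q_0$, transition function $\delta:Q\times\Sigma\to 2^Q\setminus\{\emptyset\}$ with transition relation $\Delta=\{\langle q,\sigma,s\rangle:s\in\delta(q,\sigma)\}$, and $\alpha\subseteq\Delta$; $|\mathcal{A}|=|Q|$. $\alpha$-transitions are those in $\alpha$, $\bar\alpha$-transitions those in $\Delta\setminus\alpha$; $\delta^{\alpha}(q,\sigma)$, $\delta^{\bar\alpha}(q,\sigma)$ denote the $\sigma$-successors via $\alpha$-, resp. $\bar\alpha$-transitions. A run on $w=\sigma_1\sigma_2\cdots$ is $r_0r_1\cdots$ with $r_0=q_0$, $r_{i+1}\in\delta(r_i,\sigma_{i+1})$; accepting iff it traverses $\alpha$-transitions only finitely often; $L(\mathcal{A})$ is the accepted language. $\mathcal{A}^q$ is $\mathcal{A}$ with initial state $q$; $q\sim s$ iff $L(\mathcal{A}^q)=L(\mathcal{A}^s)$. $\mathcal{A}$ is GFG if there is $f:\Sigma^*\to Q$ with $f(\epsilon)=q_0$, $\langle f(u),\sigma,f(u\sigma)\rangle\in\Delta$ for all $u,\sigma$, and for every $w\in L(\mathcal{A})$ the run $f(w[1,0]),f(w[1,1]),\dots$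 is accepting; $q$ is GFG if $\mathcal{A}^q$ is. $\mathcal{A}$ is semantically deterministic if all $\sigma$-successors of any state are pairwise $\sim$-equivalent; safe deterministic if $|\delta^{\bar\alpha}(q,\sigma)|\le1$ always; normal if whenever a path of $\bar\alpha$-transitions leads from $q$ to $s$, one also leads from $s$ to $q$. Nice: all states reachable and GFG, and normal, safe deterministic, semantically deterministic. A triple $\langle q,\sigma,s\rangle\in Q\times\Sigma\times Q$ is an allowed transition of $\mathcal{A}$ if there is $s'\in Q$ with $s\sim s'$ and $\langle q,\sigma,s'\rangle\in\Delta$. $\mathcal{A}$ is $\alpha$-maximal if every allowed transition of $\mathcal{A}$ is in $\Delta$. For tNCWs $\mathcal{A},\mathcal{B}$, a bijection $\kappa:Q_\mathcal{A}\to Q_\mathcal{B}$ is $\bar\alpha$-transition respecting if for all $q,q',\sigma$: $q'\in\delta^{\bar\alpha}_\mathcal{A}(q,\sigma)$ iff $\kappa(q')\in\delta^{\bar\alpha}_\mathcal{B}(\kappa(q),\sigma)$, and $\alpha$-transition respecting if the same holds with $\delta^{\alpha}$ in place of $\delta^{\bar\alpha}$. $\mathcal{A}$ and $\mathcal{B}$ are isomorphic if there is a bijection that is both $\alpha$- and $\bar\alpha$-transition respecting. *)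

From mathcomp Require Import all_boot.
Set Implicit Arguments. Unset Strict Implicit. Unset Printing Implicit Defensive.

Record tNCW (Sigma : finType) := TNCW {
  state : finType;
  q0 : state;
  delta : state -> Sigma -> {set state};
  delta_ne : forall q a, delta q a != set0;
  alpha : state -> Sigma -> state -> bool;
  alpha_sub : forall q a s, alpha q a s -> s \in delta q a
}.

Section Defs.
Variables (Sigma : finType) (A : tNCW Sigma).
Local Notation Q := (state A).

(* infinite words w = sigma_1 sigma_2 ... with w i = sigma_(i+1) *)
Definition word := nat -> Sigma.

Definition size_tNCW := #|Q|.

Definition run_from (q : Q) (w : word) (r : nat -> Q) : Prop :=
  r 0 = q /\ forall i, r i.+1 \in delta (r i) (w i).

Definition accepting_run (w : word) (r : nat -> Q) : Prop :=
  exists N, forall i, N <= i -> ~~ alpha (r i) (w i) (r i.+1).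

Definition accepts_from (q : Q) (w : word) : Prop :=
  exists r, run_from q w r /\ accepting_run w r.

Definition accepts (w : word) : Prop := accepts_from (q0 A) w.

Definition equiv_st (q s : Q) : Prop := forall w, accepts_from q w <-> accepts_from s w.

Definition prefix (w : word) (i : nat) : seq Sigma := mkseq w i.

Definition GFG_from (q : Q) : Prop :=
  exists f : seq Sigma -> Q,
    f [::] = q /\
    (forall u a, f (rcons u a) \in delta (f u) a) /\
    (forall w, accepts_from q w -> accepting_run w (fun i => f (prefix w i))).

Definition GFG : Prop := GFG_from (q0 A).

Definition sem_det : Prop :=
  forall q a s s', s \in delta q a -> s' \in delta q a -> equiv_st s s'.

Definition delta_bar (q : Q) (a : Sigma) : {set Q} :=
  [set s in delta q a | ~~ alpha q a s].
Definition delta_alpha (q : Q) (a : Sigma) : {set Q} :=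
  [set s in delta q a | alpha q a s].

Definition safe_det : Prop := forall q a, #|delta_bar q a| <= 1.

Definition bar_edge : rel Q := fun q s => [exists a, s \in delta_bar q a].
Definition any_edge : rel Q := fun q s => [exists a, s \in delta q a].

Definition normal : Prop :=
  forall q s, connect bar_edge q s -> connect bar_edge s q.

Definition all_reachable : Prop := forall q, connect any_edge (q0 A) q.

Definition nice : Prop :=
  all_reachable /\ (forall q, GFG_from q) /\ normal /\ safe_det /\ sem_det.

Definition allowed (q : Q) (a : Sigma) (s : Q) : Prop :=
  exists s', equiv_st s s' /\ s' \in delta q a.

Definition alpha_maximal : Prop :=
  forall q a s, allowed q a s -> s \in delta q a.

End Defs.

Definition same_lang (Sigma : finType) (A B : tNCW Sigma) : Prop :=
  forall w, accepts A w <-> accepts B w.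

Definition minimal_GFG (Sigma : finType) (A : tNCW Sigma) : Prop :=
  forall B : tNCW Sigma, GFG B -> same_lang B A -> size_tNCW A <= size_tNCW B.

Definition isomorphic (Sigma : finType) (A B : tNCW Sigma) : Prop :=
  exists kappa : state A -> state B,
    bijective kappa /\
    (forall q q' a, q' \in delta_bar q a <-> kappa q' \in delta_bar (kappa q) a) /\
    (forall q q' a, q' \in delta_alpha q a <-> kappa q' \in delta_alpha (kappa q) a).

From mathcomp Require Import all_boot.
From Stdlib Require Import FunctionalExtensionality ClassicalEpsilon.
Set Implicit Arguments. Unset Strict Implicit. Unset Printing Implicit Defensive.

(* In a nice alpha-maximal automaton, <q,a,s> is a transition exactly when
   L(s) = a^-1 L(q), and by safe determinism the safe transitions form a partial
   deterministic automaton.  Hence transitions of both kinds are determined by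
   the languages and the safe languages (words readable along safe transitions)
   of the states.  In a minimal automaton no two states share both, since
   merging them gives a smaller GFG automaton for the same language.  A
   GFG-strategy argument shows that each state of C1 is dominated by a state of
   C2 with the same language and a larger safe language, and vice versa; going
   back and forth, minimality and finiteness yield for each state of C1 a twin
   in C2 with the same language and the same safe language.  The twin map is
   injective, hence bijective by minimality of C2, and preserves both kinds of
   transitions. *)

Section Words.
Variable Sigma : finType.
Implicit Types (w : word Sigma) (u : seq Sigma).

Definition shift w n : word Sigma := fun i => w (n + i).

Definition wcat u w : word Sigma := fun i => nth (w (i - size u)) u i.

Lemma size_prefix w n : size (prefix w n) = n.
Proof. exact: size_mkseq. Qed.

Lemma prefixS w n : prefix w n.+1 = rcons (prefix w n) (w n).
Proof. exact: mkseqS. Qed.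

Lemma prefixD w m n : prefix w (m + n) = prefix w m ++ prefix (shift w m) n.
Proof. by elim: n => [|n IH]; rewrite ?addn0 ?cats0 // addnS !prefixS IH rcons_cat. Qed.

Lemma shift0 w : shift w 0 = w.
Proof. by apply: functional_extensionality => i; rewrite /shift add0n. Qed.

Lemma shiftD w m n : shift w (m + n) = shift (shift w m) n.
Proof. by apply: functional_extensionality => i; rewrite /shift addnA. Qed.

Lemma wcat0 w : wcat [::] w = w.
Proof. by apply: functional_extensionality => i; rewrite /wcat nth_nil subn0. Qed.

Lemma shift_wcat_cons a u w : shift (wcat (a :: u) w) 1 = wcat u w.
Proof. by apply: functional_extensionality => i; rewrite /shift /wcat add1n. Qed.

Lemma shift_wcat u w : shift (wcat u w) (size u) = w.
Proof.
apply: functional_extensionality => i.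
by rewrite /shift /wcat nth_default ?leq_addr // addKn.
Qed.

Lemma prefix_wcat u w n : prefix (wcat u w) (size u + n) = u ++ prefix w n.
Proof.
rewrite prefixD shift_wcat; congr (_ ++ _).
apply: (@eq_from_nth _ (w 0)) => [|i]; rewrite size_prefix // => lt_iu.
by rewrite nth_mkseq // /wcat (set_nth_default (w 0)).
Qed.

End Words.

Section LimitWord.
Variables (Sigma : finType) (a0 : Sigma) (ext : seq Sigma -> seq Sigma).

Definition ext_iter n := iter n (fun u => u ++ ext u) [::].

Definition limit_word : word Sigma := fun i => nth a0 (ext_iter i.+1) i.

Lemma ext_iterS n : ext_iter n.+1 = ext_iter n ++ ext (ext_iter n).
Proof. by []. Qed.

Lemma ext_iter_cat m n : m <= n -> exists s, ext_iter n = ext_iter m ++ s.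
Proof.
move/subnKC <-; elim: (n - m) => [|k [s IH]]; first by exists [::]; rewrite addn0 cats0.
by exists (s ++ ext (ext_iter (m + k))); rewrite addnS ext_iterS IH catA.
Qed.

Hypothesis ext_grows : forall n, 0 < size (ext (ext_iter n)).

Lemma size_ext_iter n : n <= size (ext_iter n).
Proof.
by elim: n => // n IH; rewrite ext_iterS size_cat -addn1; exact: leq_add IH (ext_grows n).
Qed.

Lemma nth_limit_word n i : i < size (ext_iter n) -> limit_word i = nth a0 (ext_iter n) i.
Proof.
move=> lt_i; have [s1 e1] := ext_iter_cat (leq_maxl n i.+1).
have [s2 e2] := ext_iter_cat (leq_maxr n i.+1).
have : nth a0 (ext_iter n ++ s1) i = nth a0 (ext_iter i.+1 ++ s2) i by rewrite -e1 -e2.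
have lt_i1 : i < size (ext_iter i.+1) := size_ext_iter i.+1.
by rewrite nth_cat lt_i nth_cat lt_i1 => ->.
Qed.

Lemma prefix_limit_word n k : k <= size (ext_iter n) -> prefix limit_word k = take k (ext_iter n).
Proof.
move=> le_k; apply: (@eq_from_nth _ a0) => [|i]; first by rewrite size_prefix size_takel.
rewrite size_prefix => lt_ik.
by rewrite nth_mkseq // nth_take // (nth_limit_word (leq_trans lt_ik le_k)).
Qed.

Lemma prefix_shift_limit_word n k : k <= size (ext (ext_iter n)) ->
  prefix (shift limit_word (size (ext_iter n))) k = take k (ext (ext_iter n)).
Proof.
move=> le_k; set m := size (ext_iter n).
have := @prefix_limit_word n.+1 (m + k).
rewrite prefixD (prefix_limit_word (leqnn m)) take_size ext_iterS size_cat leq_add2l.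
rewrite takeD take_size_cat // drop_size_cat // => /(_ le_k) /(congr1 (drop m)).
by rewrite !drop_size_cat.
Qed.

End LimitWord.

Section Runs.
Variables (Sigma : finType) (X : tNCW Sigma).
Local Notation Q := (state X).
Implicit Types (q s t : Q) (w : word Sigma).

Fixpoint reach (q : Q) (u : seq Sigma) (q' : Q) : Prop :=
  if u is a :: u' then exists2 s, s \in delta q a & reach s u' q' else q = q'.

Lemma reach_cat q s t u v : reach q u s -> reach s v t -> reach q (u ++ v) t.
Proof.
elim: u q => [|a u IH] q /=; first by move=> ->.
by case=> r qr rs st; exists r => //; exact: IH rs st.
Qed.

Lemma connect_reach q q' : connect (@any_edge _ X) q q' -> exists u, reach q u q'.
Proof.
move=> /connectP[p qp ->]; elim: p q qp => [|s p IH] q /=; first by exists [::].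
by case/andP=> /existsP[a qs] /IH[u su]; exists (a :: u); exists s.
Qed.

Lemma strategy_reach (f : seq Sigma -> Q) q :
  f [::] = q -> (forall u a, f (rcons u a) \in delta (f u) a) ->
  forall u, reach q u (f u).
Proof.
move=> f0 f_step; elim/last_ind => [|u a IH] //=.
by rewrite -cats1; apply: reach_cat IH _; exists (f (rcons u a)); rewrite ?cats1 ?f_step.
Qed.

Lemma strategy_run (f : seq Sigma -> Q) q w :
  f [::] = q -> (forall u a, f (rcons u a) \in delta (f u) a) ->
  run_from q w (fun i => f (prefix w i)).
Proof. by move=> f0 f_step; split=> // i; rewrite prefixS. Qed.

Hypothesis semX : sem_det X.

Lemma accepts_step q s w : s \in delta q (w 0) ->
  accepts_from q w <-> accepts_from s (shift w 1).
Proof.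
move=> qs; split.
  case=> r [[r0 r_step] [N safe_after]].
  have qr1 : r 1 \in delta q (w 0) by rewrite -r0; exact: r_step.
  apply/(semX qr1 qs); exists (fun i => r i.+1); split.
    by split=> // i; rewrite /shift add1n; exact: r_step.
  by exists N => i le_Ni; rewrite /shift add1n; apply: safe_after; exact: leqW.
case=> r [[r0 r_step] [N safe_after]].
exists (fun i => if i is j.+1 then r j else q); split.
  by split=> // -[|j] /=; [rewrite r0 | exact: r_step].
by exists N.+1 => -[|i] //= lt_Ni; exact: safe_after.
Qed.

Lemma accepts_reach q q' u w : reach q u q' ->
  accepts_from q (wcat u w) <-> accepts_from q' w.
Proof.
elim: u q => [|a u IH] q /=; first by move=> ->; rewrite wcat0.
by case=> s qs su; rewrite (accepts_step (w := wcat (a :: u) w) qs) shift_wcat_cons; exact: IH.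
Qed.

Hypothesis amX : alpha_maximal X.

Lemma alpha_maximal_residual q a s :
  (forall w, accepts_from s w <-> accepts_from q (wcat [:: a] w)) -> s \in delta q a.
Proof.
move=> res; have /set0Pn[s0 qs0] := delta_ne q a.
apply: amX; exists s0; split => // w.
by rewrite res (@accepts_reach q s0 [:: a]) //; exists s0.
Qed.

End Runs.

Section SafeRuns.
Variables (Sigma : finType) (X : tNCW Sigma).
Local Notation Q := (state X).
Implicit Types (q s : Q) (w : word Sigma).

Lemma delta_bar_delta q a s : s \in delta_bar q a -> s \in delta q a.
Proof. by rewrite inE => /andP[]. Qed.

Definition safe_step (q : Q) (a : Sigma) : option Q := [pick s in delta_bar q a].

Fixpoint safe_path (q : Q) (u : seq Sigma) : option Q :=
  if u is a :: u' then obind (safe_path^~ u') (safe_step q a) else Some q.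

Definition safe (q : Q) (u : seq Sigma) : bool := safe_path q u != None.

Lemma safe_path_cat q u v : safe_path q (u ++ v) = obind (safe_path^~ v) (safe_path q u).
Proof. by elim: u q => [|a u IH] q //=; case: (safe_step q a). Qed.

Lemma safe_step_delta_bar q a s : safe_step q a = Some s -> s \in delta_bar q a.
Proof. by rewrite /safe_step; case: pickP => // t qt [<-]. Qed.

Lemma safe_path_reach q q' u : safe_path q u = Some q' -> reach q u q'.
Proof.
elim: u q => [|a u IH] q /=; first by case.
case E: (safe_step q a) => [s|] // su; exists s; last exact: IH.
by have := safe_step_delta_bar E; rewrite inE => /andP[].
Qed.

Lemma safe_path_connect q q' u : safe_path q u = Some q' -> connect (@bar_edge _ X) q q'.
Proof.
elim: u q => [|a u IH] q /=; first by case=> ->.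
case E: (safe_step q a) => [s|] // su; apply: connect_trans (IH _ su).
by apply/connect1/existsP; exists a; exact: safe_step_delta_bar.
Qed.

Lemma safe_take q u n : safe q u -> safe q (take n u).
Proof.
by rewrite /safe -{1}(cat_take_drop n u) safe_path_cat; case: (safe_path q (take n u)).
Qed.

Lemma safe_closure q w : (forall k, safe q (prefix w k)) -> accepts_from q w.
Proof.
move=> safe_w; pose r k := odflt q (safe_path q (prefix w k)).
have r_step k : r k.+1 \in delta_bar (r k) (w k).
  move: (safe_w k.+1); rewrite /safe /r prefixS -cats1 safe_path_cat.
  case: (safe_path q (prefix w k)) => [s|] //=.
  by case E: (safe_step s (w k)) => [t|] //= _; exact: safe_step_delta_bar.
exists r; split; last by exists 0 => k _; have := r_step k; rewrite inE => /andP[].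
by split=> // k; have := r_step k; rewrite inE => /andP[].
Qed.

Hypothesis sdX : safe_det X.

Lemma safe_stepE q a s : s \in delta_bar q a -> safe_step q a = Some s.
Proof.
move=> qs; rewrite /safe_step; case: pickP => [t qt|none]; last by rewrite none in qs.
by congr Some; apply: (card_le1_eqP (sdX q a)).
Qed.

Lemma safe_cons q a u s : s \in delta_bar q a -> safe q (a :: u) = safe s u.
Proof. by move/safe_stepE => qs; rewrite /safe /= qs. Qed.

Lemma safe_consP q a u : reflect (exists2 s, s \in delta_bar q a & safe s u) (safe q (a :: u)).
Proof.
apply: (iffP idP) => [|[s qs]]; last by rewrite (safe_cons _ qs).
rewrite /safe /=; case E: (safe_step q a) => [s|] //= su.
by exists s => //; exact: safe_step_delta_bar.
Qed.

Lemma connect_safe_path q q' : connect (@bar_edge _ X) q q' -> exists u, safe_path q u = Some q'.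
Proof.
move=> /connectP[p qp ->]; elim: p q qp => [|s p IH] q /=; first by exists [::].
case/andP=> /existsP[a qs] /IH[u su]; exists (a :: u).
by rewrite /= (safe_stepE qs).
Qed.

Lemma run_eventually_safe q w r : run_from q w r -> accepting_run w r ->
  exists N, forall M k, N <= M -> safe (r M) (prefix (shift w M) k).
Proof.
case=> _ r_step [N safe_after]; exists N => M k le_NM.
rewrite /safe; suff -> : safe_path (r M) (prefix (shift w M) k) = Some (r (M + k)) by [].
elim: k => [|k IH]; first by rewrite addn0.
rewrite prefixS -cats1 safe_path_cat IH /= addnS (@safe_stepE _ _ (r (M + k).+1)) //.
by rewrite inE /shift r_step safe_after // (leq_trans le_NM) ?leq_addr.
Qed.

Lemma safe_return q u : normal X -> safe q u -> exists v, safe_path q (u ++ v) = Some q.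
Proof.
move=> normX; rewrite /safe; case E: (safe_path q u) => [s|] // _.
have [v sq] := connect_safe_path (normX _ _ (safe_path_connect E)).
by exists v; rewrite safe_path_cat E.
Qed.

End SafeRuns.

Section Compare.
Variables (Sigma : finType) (X Y : tNCW Sigma).
Implicit Types (x : state X) (y : state Y).

Definition lang_eq x y := forall w, accepts_from x w <-> accepts_from y w.

Definition safe_sub x y := forall u, safe x u -> safe y u.

Definition dominated x y := lang_eq x y /\ safe_sub x y.

Definition twin x y := lang_eq x y /\ safe x =1 safe y.

End Compare.

Section CompareTheory.
Variables (Sigma : finType) (X Y Z : tNCW Sigma).
Implicit Types (x : state X) (y : state Y) (z : state Z).

Lemma dominated_refl x : dominated x x.
Proof. by split=> [w|u]. Qed.

Lemma dominated_trans x y z : dominated x y -> dominated y z -> dominated x z.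
Proof. by case=> xy sub_xy [yz sub_yz]; split=> [w|u /sub_xy /sub_yz]; rewrite ?xy ?yz. Qed.

Lemma twin_sym x y : twin x y -> twin y x.
Proof. by case=> xy safe_xy; split=> [w|u]; rewrite ?xy ?safe_xy. Qed.

Lemma twin_trans x y z : twin x y -> twin y z -> twin x z.
Proof. by case=> xy safe_xy [yz safe_yz]; split=> [w|u]; rewrite ?xy ?yz ?safe_xy ?safe_yz. Qed.

Hypotheses (semX : sem_det X) (semY : sem_det Y).

Lemma lang_eq_reach x x' y y' u :
  lang_eq x y -> reach x u x' -> reach y u y' -> lang_eq x' y'.
Proof.
move=> xy xx' yy' w.
by rewrite -(accepts_reach semX w xx') -(accepts_reach semY w yy').
Qed.

Lemma lang_eq_succ x x' y y' a :
  lang_eq x y -> x' \in delta x a -> y' \in delta y a -> lang_eq x' y'.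
Proof.
move=> xy xx' yy'; apply: (lang_eq_reach (u := [:: a])) xy _ _; first by exists x'.
by exists y'.
Qed.

Lemma dominated_safe_path x x' y u : dominated x y -> safe_path x u = Some x' ->
  exists2 y', safe_path y u = Some y' & dominated x' y'.
Proof.
case=> xy sub_xy xx'; have : safe y u by apply: sub_xy; rewrite /safe xx'.
rewrite /safe; case yy': (safe_path y u) => [y'|] // _; exists y' => //; split.
  exact: lang_eq_reach xy (safe_path_reach xx') (safe_path_reach yy').
by move=> v; have := sub_xy (u ++ v); rewrite /safe !safe_path_cat xx' yy'.
Qed.

Lemma twin_safe_path x x' y u : twin x y -> safe_path x u = Some x' ->
  exists2 y', safe_path y u = Some y' & twin x' y'.
Proof.
case=> xy safe_xy xx'; have : safe y u by rewrite -safe_xy /safe xx'.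
rewrite /safe; case yy': (safe_path y u) => [y'|] // _; exists y' => //; split.
  exact: lang_eq_reach xy (safe_path_reach xx') (safe_path_reach yy').
by move=> v; have := safe_xy (u ++ v); rewrite /safe !safe_path_cat xx' yy'.
Qed.

Hypothesis amX : alpha_maximal X.

Lemma mem_delta_lang_eq x x' y y' a :
  lang_eq x y -> lang_eq x' y' -> y' \in delta y a -> x' \in delta x a.
Proof.
move=> xy xy' yy'; apply: alpha_maximal_residual => // w.
by rewrite xy' xy (accepts_reach semY (q' := y') (u := [:: a])) //; exists y'.
Qed.

End CompareTheory.

Lemma twin_delta (Sigma : finType) (X Y : tNCW Sigma) (x x' : state X) (y y' : state Y) a :
  sem_det X -> alpha_maximal X -> sem_det Y -> alpha_maximal Y ->
  twin x y -> twin x' y' -> (x' \in delta x a) = (y' \in delta y a).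
Proof.
move=> semX amX semY amY xy xy'; apply/idP/idP.
  exact: (mem_delta_lang_eq semY semX amY (twin_sym xy).1 (twin_sym xy').1).
exact: (mem_delta_lang_eq semX semY amX xy.1 xy'.1).
Qed.

Section NiceProps.
Variables (Sigma : finType) (X : tNCW Sigma).
Hypothesis nX : nice X.

Lemma nice_GFG : GFG X. Proof. by case: nX => _ [gfg _]; exact: gfg. Qed.
Lemma nice_normal : normal X. Proof. by case: nX => _ [_ []]. Qed.
Lemma nice_safe_det : safe_det X. Proof. by case: nX => _ [_ [_ []]]. Qed.
Lemma nice_sem_det : sem_det X. Proof. by case: nX => _ [_ [_ []]]. Qed.

End NiceProps.

Section Redirect.
Variables (Sigma : finType) (A : tNCW Sigma).
Local Notation Q := (state A).
Hypotheses (sdA : safe_det A) (semA : sem_det A) (amA : alpha_maximal A).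
Variables (R : {set Q}) (g : Q -> Q).
Hypothesis g_in : forall s, g s \in R.
Hypothesis g_dom : forall s, dominated s (g s).
Hypothesis safe_sub_g : forall t a s, t \in R -> s \in delta_bar t a -> safe_sub (g s) s.

(* The redirected automaton keeps the states of R and replaces every transition
   <q,a,s> by <q,a,g s>, which is safe when it is the image of a safe transition.
   The hypotheses on g give each of its states the safe language it has in A, so
   it accepts no more than A, while a GFG strategy of A can be shadowed in it. *)
Local Notation QR := {x : Q | x \in R}.

Definition redirect (s : Q) : QR := exist _ (g s) (g_in s).
Definition rdelta (x : QR) a : {set QR} := redirect @: delta (val x) a.
Definition rdelta_bar (x : QR) a : {set QR} := redirect @: delta_bar (val x) a.
Definition ralpha (x : QR) a y := (y \in rdelta x a) && (y \notin rdelta_bar x a).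

Lemma rdelta_neq0 x a : rdelta x a != set0.
Proof.
have /set0Pn[s xs] := delta_ne (val x) a.
by apply/set0Pn; exists (redirect s); exact: imset_f.
Qed.

Lemma ralpha_sub x a y : ralpha x a y -> y \in rdelta x a.
Proof. by case/andP. Qed.

Definition redirected : tNCW Sigma :=
  @TNCW Sigma QR (redirect (q0 A)) rdelta rdelta_neq0 ralpha ralpha_sub.
Local Notation B := redirected.

Lemma rdelta_bar_sub x a : rdelta_bar x a \subset rdelta x a.
Proof.
apply/subsetP => y /imsetP[s xs ->]; apply: imset_f.
by move: xs; rewrite inE => /andP[].
Qed.

Lemma delta_bar_redirected (x : state B) a : delta_bar x a = rdelta_bar x a.
Proof.
apply/setP => y; rewrite inE /= /ralpha negb_and negbK.
case: (boolP (y \in rdelta_bar x a)) => [/(subsetP (rdelta_bar_sub x a)) -> //|_].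
by rewrite orbF andbN.
Qed.

Lemma safe_det_redirected : safe_det B.
Proof. by move=> x a; rewrite delta_bar_redirected (leq_trans (leq_imset_card _ _)). Qed.

Lemma safe_redirected u (x : state B) : safe x u = safe (val x) u.
Proof.
elim: u x => [|a u IH] x //; apply/idP/idP.
- case/(safe_consP safe_det_redirected) => y; rewrite delta_bar_redirected.
  case/imsetP => s xs -> {y}; rewrite IH => /(safe_sub_g (valP x) xs) su.
  by apply/(safe_consP sdA); exists s.
- case/(safe_consP sdA) => s xs /(g_dom s).2 gsu.
  apply/(safe_consP safe_det_redirected); exists (redirect s); last by rewrite IH.
  by rewrite delta_bar_redirected imset_f.
Qed.

Lemma redirected_accepts (x : state B) w : accepts_from x w -> accepts_from (val x) w.
Proof.
case=> r [[r0 r_step] r_acc].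
have track i : accepts_from (val x) w <-> accepts_from (val (r i)) (shift w i).
  elim: i => [|i IH]; first by rewrite r0 shift0.
  have /imsetP[s xs ->] := r_step i.
  rewrite IH (accepts_step semA (s := s)); last by rewrite /shift addn0.
  by rewrite -shiftD addn1; exact: (g_dom s).1.
have [N safe_N] := run_eventually_safe safe_det_redirected (conj r0 r_step) r_acc.
by apply/(track N)/safe_closure => k; rewrite -safe_redirected; exact: safe_N.
Qed.

Section Strategy.
Variable f : seq Sigma -> Q.
Hypothesis f0 : f [::] = q0 A.
Hypothesis f_step : forall u a, f (rcons u a) \in delta (f u) a.
Hypothesis f_acc : forall w, accepts_from (q0 A) w -> accepting_run w (fun i => f (prefix w i)).

(* The strategy for B shadows f: when f takes a safe transition from a state
   whose safe language is contained in that of the current state x, it moves to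
   the safe successor of x (which then exists, so the default of odflt is never
   used); otherwise it resets to the redirection of f's new state. *)
Definition rnext (x : state B) (v : seq Sigma) (a : Sigma) : state B :=
  if excluded_middle_informative (~~ alpha (f v) a (f (rcons v a)) /\ safe_sub (f v) (val x))
  then odflt (redirect (f (rcons v a))) [pick y in rdelta_bar x a]
  else redirect (f (rcons v a)).

Fixpoint rstrat_rev (ru : seq Sigma) : state B :=
  if ru is a :: ru' then rnext (rstrat_rev ru') (rev ru') a else redirect (q0 A).

Definition rstrat (u : seq Sigma) : state B := rstrat_rev (rev u).

Lemma rstrat_rcons u a : rstrat (rcons u a) = rnext (rstrat u) u a.
Proof. by rewrite /rstrat rev_rcons /= revK. Qed.

Lemma rnext_cases x v a :
  rnext x v a \in rdelta_bar x a \/ rnext x v a = redirect (f (rcons v a)).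
Proof.
rewrite /rnext; case: excluded_middle_informative => /= _; last by right.
by case: pickP => [y|_]; [left|right].
Qed.

Lemma rstrat_equiv u : lang_eq (val (rstrat u)) (f u).
Proof.
elim/last_ind: u => [|u a IH]; first by rewrite f0 => w; symmetry; exact: (g_dom _).1.
rewrite rstrat_rcons; case: (rnext_cases (rstrat u) u a) => [/imsetP[s xs ->]|->] w /=;
  last by symmetry; exact: (g_dom _).1.
rewrite -((g_dom s).1 w).
exact: (lang_eq_succ semA semA IH (delta_bar_delta xs) (f_step u a) w).
Qed.

Lemma rstrat_step u a : rstrat (rcons u a) \in rdelta (rstrat u) a.
Proof.
rewrite rstrat_rcons; case: (rnext_cases (rstrat u) u a) => [|->].
  exact: (subsetP (rdelta_bar_sub _ _)).
by apply/imset_f/(mem_delta_lang_eq semA semA amA (rstrat_equiv u) _ (f_step u a)).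
Qed.

Lemma rnext_safe x v a : ~~ alpha (f v) a (f (rcons v a)) ->
  safe_sub (f (rcons v a)) (val (rnext x v a)) /\
  (safe_sub (f v) (val x) -> rnext x v a \in rdelta_bar x a).
Proof.
move=> safe_fa; have fa_bar : f (rcons v a) \in delta_bar (f v) a by rewrite inE f_step.
rewrite /rnext; case: excluded_middle_informative => /= [[_ sub_fx]|not_dom]; last first.
  by split=> [|sub_fx]; [exact: (g_dom _).2 | case: not_dom; split].
case: pickP => [y /imsetP[s xs ->] | no_succ]; last first.
  have /(safe_consP sdA)[s xs _] : safe (val x) [:: a].
    by apply: sub_fx; rewrite (safe_cons sdA _ fa_bar).
  by have := no_succ (redirect s); rewrite imset_f.
split=> [u fa_u|_]; last exact: imset_f.
apply: (g_dom s).2; rewrite -(safe_cons sdA _ xs); apply: sub_fx.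
by rewrite (safe_cons sdA _ fa_bar).
Qed.

Lemma rstrat_accepting w : accepts_from (q0 A) w ->
  @accepting_run _ B w (fun i => rstrat (prefix w i)).
Proof.
move=> /f_acc [N safe_after].
have safe_fi i : N <= i -> ~~ alpha (f (prefix w i)) (w i) (f (rcons (prefix w i) (w i))).
  by rewrite -prefixS; exact: safe_after.
have dom i : N < i -> safe_sub (f (prefix w i)) (val (rstrat (prefix w i))).
  case: i => // i lt_Ni; rewrite prefixS rstrat_rcons.
  exact: (rnext_safe _ (safe_fi i lt_Ni)).1.
exists N.+1 => i lt_Ni; rewrite /= prefixS rstrat_rcons /ralpha.
by rewrite ((rnext_safe _ (safe_fi i (ltnW lt_Ni))).2 (dom i lt_Ni)) andbF.
Qed.

End Strategy.

Hypothesis gfgA : GFG A.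

Lemma redirected_GFG : GFG B.
Proof.
case: gfgA => f [f0 [f_step f_acc]]; exists (rstrat f); do 2!split => //.
  exact: rstrat_step.
by move=> w /redirected_accepts /((g_dom _).1 _).2; exact: rstrat_accepting.
Qed.

Lemma redirected_same_lang : same_lang B A.
Proof.
case: gfgA => f [f0 [f_step f_acc]] w; split.
  by move/redirected_accepts/((g_dom _).1 _).2.
move=> acc; exists (fun i => rstrat f (prefix w i)); split; last exact: rstrat_accepting.
exact: strategy_run (rstrat_step f0 f_step).
Qed.

Lemma minimal_redirect_onto : minimal_GFG A -> forall s, s \in R.
Proof.
move=> minA s; apply/negPn/negP => s_notin.
have lt_R : #|R| < #|Q|.
  rewrite -cardsT; apply: proper_card; rewrite properT.
  by apply: contraNneq s_notin => ->; rewrite inE.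
have := minA B redirected_GFG redirected_same_lang.
have -> : size_tNCW B = #|R| by rewrite /size_tNCW /= card_sig; apply: eq_card.
by rewrite leqNgt lt_R.
Qed.

End Redirect.

Section Minimal.
Variables (Sigma : finType) (A : tNCW Sigma).
Hypotheses (nA : nice A) (amA : alpha_maximal A) (minA : minimal_GFG A).
Local Notation Q := (state A).
Let sdA := nice_safe_det nA.
Let semA := nice_sem_det nA.
Let redirect_onto := minimal_redirect_onto sdA semA amA.

Lemma twin_eq (p p' : Q) : twin p p' -> p = p'.
Proof.
move=> pp'; apply: NNPP => neq.
pose g s := if s == p' then p else s.
have g_in s : g s \in [set~ p'].
  by rewrite in_setC1 /g; case: (s =P p') => [_|/eqP //]; apply/eqP.
have p'p : dominated p' p by case: (twin_sym pp') => p'p safe_p'p; split=> // u; rewrite safe_p'p.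
have g_dom s : dominated s (g s) by rewrite /g; case: eqP => [->|_] //; exact: dominated_refl.
have safe_sub_g t a s : t \in [set~ p'] -> s \in delta_bar t a -> safe_sub (g s) s.
  by rewrite /g; case: eqP => [->|_] _ _ u; rewrite ?pp'.2.
have := redirect_onto g_in g_dom safe_sub_g (nice_GFG nA) minA p'.
by rewrite in_setC1 eqxx.
Qed.

(* Otherwise redirect the safe component of p onto the corresponding states
   reached from p', which by normality lie outside that component. *)
Lemma dominated_connect (p p' : Q) : dominated p p' -> connect (@bar_edge _ A) p' p.
Proof.
move=> pp'; apply: NNPP => not_back.
pose C := [set s | connect (@bar_edge _ A) p s].
have C_closed t a s : t \notin C -> s \in delta_bar t a -> s \notin C.
  move=> + ts; rewrite !inE => /negP not_pt; apply/negP => ps; apply: not_pt.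
  apply: (nice_normal nA); apply: connect_trans _ (nice_normal nA ps).
  by apply: connect1; apply/existsP; exists a.
have : forall s, exists t, s \in C -> dominated s t /\ t \notin C.
  move=> s; case: (boolP (s \in C)) => [|s_out]; last by exists s; rewrite (negbTE s_out).
  rewrite inE => /(connect_safe_path sdA)[u ps].
  have [s' p's' ss'] := dominated_safe_path semA semA pp' ps; exists s' => _; split=> //.
  rewrite inE; apply/negP => ps'; apply: not_back.
  exact: connect_trans (safe_path_connect p's') (nice_normal nA ps').
case/choice => gC gC_spec; pose g s := if s \in C then gC s else s.
have g_in s : g s \in ~: C by rewrite inE /g; case: ifP => [/gC_spec[] | /negbT].
have g_dom s : dominated s (g s).
  by rewrite /g; case: ifP => [/gC_spec[] // | _]; exact: dominated_refl.
have safe_sub_g t a s : t \in ~: C -> s \in delta_bar t a -> safe_sub (g s) s.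
  by rewrite inE /g => t_out /(C_closed _ _ _ t_out) /negbTE -> u.
have := redirect_onto g_in g_dom safe_sub_g (nice_GFG nA) minA p.
by rewrite !inE connect0.
Qed.

End Minimal.

Section Dominate.
Variables (Sigma : finType) (C1 C2 : tNCW Sigma).
Hypotheses (n1 : nice C1) (n2 : nice C2) (same12 : same_lang C1 C2).

Lemma safe_escape_cycle (p : state C1) (q : state C2) : ~ safe_sub p q ->
  exists b : seq Sigma * seq Sigma, safe_path p (b.1 ++ b.2) = Some p /\ ~~ safe q b.1.
Proof.
move=> not_sub; have [u pu not_qu] : exists2 u, safe p u & ~~ safe q u.
  apply: NNPP => no_u; apply: not_sub => u pu; apply: NNPP => /negP not_qu.
  by apply: no_u; exists u.
have [v pv] := safe_return (nice_safe_det n1) (nice_normal n1) pu.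
by exists (u, v).
Qed.

(* Otherwise C1 accepts a word that reaches p and then loops through safe cycles
   of p, each of which leaves the safe language of the state the GFG strategy of
   C2 is in at its start; the strategy's run then sees infinitely many
   alpha-transitions. *)
Lemma dominate (p : state C1) : exists q : state C2, dominated p q.
Proof.
apply: NNPP => no_dom.
have [sem1 sem2] := (nice_sem_det n1, nice_sem_det n2).
case: n1 => reach1 _; have [x0 x0p] := connect_reach (reach1 p).
case: (nice_GFG n2) => f [f0 [f_step f_acc]].
have f_lang v : reach p v p -> lang_eq p (f (x0 ++ v)).
  move=> pv; have x0v := reach_cat x0p pv.
  exact: (lang_eq_reach sem1 sem2 (same12 : lang_eq _ _) x0v (strategy_reach f0 f_step _)).
have : forall q : state C2, exists b : seq Sigma * seq Sigma, lang_eq p q ->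
    safe_path p (b.1 ++ b.2) = Some p /\ ~~ safe q b.1.
  move=> q; case: (classic (lang_eq p q)) => [pq|not_pq]; last by exists ([::], [::]) => /not_pq.
  have [b hb] := safe_escape_cycle (fun pq_sub => no_dom (ex_intro _ q (conj pq pq_sub))).
  by exists b.
case/choice => blk blk_spec.
pose ext v := let b := blk (f (x0 ++ v)) in b.1 ++ b.2.
have cycle n : safe_path p (ext_iter ext n) = Some p.
  elim: n => [|n IH] //; rewrite ext_iterS safe_path_cat IH /=.
  exact: (blk_spec _ (f_lang _ (safe_path_reach IH))).1.
have escape n := (blk_spec _ (f_lang _ (safe_path_reach (cycle n)))).2.
have grows n : 0 < size (ext (ext_iter ext n)).
  by move: (escape n); rewrite /ext /=; case: (blk _) => -[].
have [a0 _] : exists a0 : Sigma, true by move: (grows 0); case: (ext _) => [|a] //; exists a.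
pose v := limit_word a0 ext.
have accepted : accepts C1 (wcat x0 v).
  rewrite /accepts (accepts_reach sem1 _ x0p); apply: safe_closure => k.
  rewrite (prefix_limit_word a0 grows (size_ext_iter grows k)).
  by apply: safe_take; rewrite /safe cycle.
have [N safe_N] := run_eventually_safe (nice_safe_det n2) (strategy_run _ f0 f_step)
  (f_acc _ ((same12 _).1 accepted)).
pose b := blk (f (x0 ++ ext_iter ext N)).
have := safe_N (size x0 + size (ext_iter ext N)) (size b.1).
rewrite (leq_trans (size_ext_iter grows N) (leq_addl _ _)) /= prefix_wcat.
rewrite (prefix_limit_word a0 grows (leqnn _)) take_size shiftD shift_wcat.
rewrite prefix_shift_limit_word /ext /= -/b ?take_size_cat ?size_cat ?leq_addr //.
by rewrite (negbTE (escape N)) => /(_ isT).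
Qed.

End Dominate.

Section Twins.
Variables (Sigma : finType) (C1 C2 : tNCW Sigma).
Hypotheses (n1 : nice C1) (n2 : nice C2) (same12 : same_lang C1 C2).
Hypotheses (min1 : minimal_GFG C1) (am1 : alpha_maximal C1).

(* Iterating "dominate" back and forth gives h : C1 -> C1 that weakly increases
   safe languages and, by minimality, stays in the safe component of its
   argument; on a cycle of h all the inclusions collapse to equalities. *)
Lemma exists_twin (p : state C1) : exists q : state C2, twin p q.
Proof.
have same21 : same_lang C2 C1 by move=> w; rewrite same12.
have : forall x : state C1, exists x' : state C1,
    exists2 q : state C2, dominated x q & dominated q x'.
  move=> x; have [q xq] := dominate n1 n2 same12 x.
  by have [x' qx'] := dominate n2 n1 same21 q; exists x', q.
case/choice => h h_spec.
have h_dom x : dominated x (h x) by have [q xq qhx] := h_spec x; exact: dominated_trans xq qhx.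
have iter_dom m n : m <= n -> dominated (iter m h p) (iter n h p).
  move/subnKC <-; elim: (n - m) => [|k IH]; first by rewrite addn0; exact: dominated_refl.
  by rewrite addnS; exact: dominated_trans IH (h_dom _).
have iter_back n : connect (@bar_edge _ C1) (iter n h p) p.
  elim: n => [|n IH]; first exact: connect0.
  exact: connect_trans (dominated_connect n1 am1 min1 (h_dom _)) IH.
have /trajectP[i lt_i cyc] := looping_order h p.
have [q xq qhx] := h_spec (iter i h p).
have xq_twin : twin (iter i h p) q.
  split=> [|u]; first exact: xq.1.
  apply/idP/idP => [/xq.2 // | /qhx.2].
  by rewrite -iterS => /(iter_dom _ _ lt_i).2; rewrite cyc.
have [u xp] := connect_safe_path (nice_safe_det n1) (iter_back i).
by have [q' _ pq'] := twin_safe_path (nice_sem_det n1) (nice_sem_det n2) xq_twin xp; exists q'.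
Qed.

End Twins.

Lemma twin_delta_bar (Sigma : finType) (X Y : tNCW Sigma) (p p' : state X) (q q' : state Y) a :
  nice X -> nice Y -> alpha_maximal Y -> minimal_GFG Y ->
  twin p q -> twin p' q' -> p' \in delta_bar p a -> q' \in delta_bar q a.
Proof.
move=> nX nY amY minY [pq safe_pq] p'q' pp'.
have /(safe_consP (nice_safe_det nY))[t qt _] : safe q [:: a].
  by rewrite -safe_pq (safe_cons (nice_safe_det nX) _ pp').
suff p't : twin p' t by rewrite (twin_eq nY amY minY (twin_trans (twin_sym p'q') p't)).
split; last first.
  move=> u; rewrite -(safe_cons (nice_safe_det nX) _ pp') safe_pq.
  by rewrite (safe_cons (nice_safe_det nY) _ qt).
have [pp'_delta qt_delta] := (delta_bar_delta pp', delta_bar_delta qt).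
exact: (lang_eq_succ (nice_sem_det nX) (nice_sem_det nY) pq pp'_delta qt_delta).
Qed.

Lemma in_delta_alpha (Sigma : finType) (X : tNCW Sigma) (q s : state X) a :
  (s \in delta_alpha q a) = (s \in delta q a) && (s \notin delta_bar q a).
Proof. by rewrite !inE; case: (s \in delta q a); case: (alpha q a s). Qed.

Theorem mainTheorem3 (Sigma : finType) (C1 C2 : tNCW Sigma) :
  GFG C1 -> GFG C2 -> nice C1 -> nice C2 ->
  same_lang C1 C2 ->
  minimal_GFG C1 -> minimal_GFG C2 ->
  alpha_maximal C1 -> alpha_maximal C2 ->
  isomorphic C1 C2.
Proof.
move=> gfg1 _ n1 n2 same12 min1 min2 am1 am2.
have /choice[k k_twin] := exists_twin n1 n2 same12 min1 am1.
have k_inj : injective k.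
  move=> p p' eq_k; apply: (twin_eq n1 am1 min1); apply: twin_trans (k_twin p) _.
  by rewrite eq_k; exact: twin_sym.
have k_bar q q' a : (q' \in delta_bar q a) = (k q' \in delta_bar (k q) a).
  apply/idP/idP; first exact: twin_delta_bar n1 n2 am2 min2 (k_twin q) (k_twin q').
  exact: twin_delta_bar n2 n1 am1 min1 (twin_sym (k_twin q)) (twin_sym (k_twin q')).
have k_delta q q' a : (q' \in delta q a) = (k q' \in delta (k q) a).
  by apply: twin_delta (nice_sem_det n1) am1 (nice_sem_det n2) am2 (k_twin q) (k_twin q').
exists k; split; first exact: inj_card_bij k_inj (min2 C1 gfg1 same12).
by split=> q q' a; rewrite ?in_delta_alpha k_bar ?k_delta.
Qed.
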